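(* Let $A,C$ be integers with $AC\neq0$ and let $f(X)=AX+\frac{C}{X}$. Suppose there exists a nonzero rational number $T$ such that the elliptic curve \[E_2:\ Y^2=(X-2ACT^2)(X+2ACT^2)\bigl(X-2AC(2A^2T^4+(4AC-1)T^2+2C^2)\bigr)\] has positive rank over $\mathbb{Q}$. Then the equation $f(x)f(y)=f(z)$ has infinitely many nontrivial rational solutions $(x,y,z)$.
   Context: A solution $(x,y,z)$ (with $x,y,z$ nonzero, so that $f$ is defined) of $f(x)f(y)=f(z)$ is called nontrivial if $x\neq z$, $y\neq z$ and $f(z)\neq 0$. *)

From HB Require Import structures.
From mathcomp Require Import all_boot all_order all_algebra.
Set Implicit Arguments. Unset Strict Implicit. Unset Printing Implicit Defensive.
Import Order.TTheory GRing.Theory Num.Theory.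
Local Open Scope ring_scope.

Definition fAC (A C : int) (x : rat) : rat := A%:~R * x + C%:~R / x.

Definition nontrivial_sol (A C : int) (t : rat * rat * rat) : Prop :=
  let: (x, y, z) := t in
  [/\ x != 0, y != 0 & z != 0] /\
  fAC A C x * fAC A C y = fAC A C z /\
  [/\ x != z, y != z & fAC A C z != 0].

(* Elliptic curve in Weierstrass form y^2 = x^3 + a x^2 + b x + c over Q.
   Points: None = point at infinity O, Some (x, y) = affine point. *)
Definition ec_point := option (rat * rat).

Definition on_curve (a b c : rat) (P : ec_point) : bool :=
  match P with
  | None => true
  | Some (x, y) => y ^+ 2 == x ^+ 3 + a * x ^+ 2 + b * x + c
  end.

Definition ec_add (a b c : rat) (P Q : ec_point) : ec_point :=
  match P, Q with
  | None, _ => Q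
  | _, None => P
  | Some (x1, y1), Some (x2, y2) =>
    if (x1 == x2) && (y1 == - y2) then None
    else
      let l := if x1 == x2 then (3 * x1 ^+ 2 + 2 * a * x1 + b) / (2 * y1)
               else (y2 - y1) / (x2 - x1) in
      let x3 := l ^+ 2 - a - x1 - x2 in
      Some (x3, - (l * (x3 - x1) + y1))
  end.

Definition ec_mul (a b c : rat) (n : nat) (P : ec_point) : ec_point :=
  iter n (ec_add a b c P) None.

(* E(Q) has positive rank iff it contains a rational point of infinite order *)
Definition positive_rank (a b c : rat) : Prop :=
  exists P : ec_point, on_curve a b c P /\ forall n : nat, (0 < n)%N -> ec_mul a b c n P != None.

(* the curve Y^2 = (X - e1)(X - e2)(X - e3), expanded *)
Definition positive_rank_roots (e1 e2 e3 : rat) : Prop :=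
  positive_rank (- (e1 + e2 + e3)) (e1 * e2 + e1 * e3 + e2 * e3) (- (e1 * e2 * e3)).

(* Write u = f(T) and D = 4AC. Since f((k + w) / (2A)) = k whenever k^2 - w^2 = D, a rational
   point (X, Y) with Y <> 0 of the curve Y^2 = X (X - D) (X - D u^2) yields y, z with f(z) = s
   and f(y) = s / u, where s = (X^2 - D^2 u^2) / (2Y); hence f(T) f(y) = f(z). After
   X |-> (X + 2ACT^2) / T^2 this curve is E_2, which is nonsingular when u is not 0 or +-1,
   so the multiples of a point of infinite order have infinitely many abscissae, and some of
   them avoid the roots of a polynomial vanishing whenever the solution is trivial or known.
   For u = +-1 the identities f(-x) = -f(x) and f(C / (Ax)) = f(x) give solutions directly,
   and for u = 0, where -AC is a square, so do the rational points (X, Y) of the circle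
   X^2 + Y^2 = 1 - AC, through (X/A, Y/A, XY/A). *)

From HB Require Import structures.
From mathcomp Require Import all_boot all_order all_algebra.
From mathcomp Require Import ring lra.
Import Order.TTheory GRing.Theory Num.Theory.
Local Open Scope ring_scope.

Set Implicit Arguments.
Unset Strict Implicit.
Unset Printing Implicit Defensive.

Lemma poly_neq0_horner (R : nzRingType) (p : {poly R}) x v : p.[x] = v -> v != 0 -> p != 0.
Proof. by move=> <-; apply: contraNneq => ->; rewrite horner0. Qed.

Lemma exists_nat_nonroot_notin (R : numDomainType) (T : eqType) (F : nat -> T)
    (p : {poly R}) (l : seq T) :
  p != 0 -> injective F -> exists n, ~~ root p n%:R /\ F n \notin l.
Proof.
move=> p0 F_inj; set idx := iota 0 (size p + size l).
pose is_root n := root p n%:R; pose in_l n := F n \in l.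
have few_roots : (count is_root idx < size p)%N.
  rewrite -size_filter -(size_map (fun n => n%:R : R)).
  apply: max_poly_roots p0 _ _.
    by apply/allP => x /mapP [n]; rewrite mem_filter => /andP [? _] ->.
  have natr_inj : injective (fun n : nat => n%:R : R).
    by move=> m n /eqP; rewrite eqr_nat => /eqP.
  by rewrite map_inj_uniq ?filter_uniq ?iota_uniq.
have few_in_l : (count in_l idx <= size l)%N.
  rewrite -size_filter -(size_map F); apply: uniq_leq_size.
    by rewrite map_inj_uniq ?filter_uniq ?iota_uniq.
  by move=> x /mapP [n]; rewrite mem_filter => /andP [? _] ->.
have few_bad : (count (predU is_root in_l) idx < size p + size l)%N.
  apply: (@leq_ltn_trans (count is_root idx + count in_l idx)).
    by rewrite -count_predUI leq_addr.
  by rewrite -addSn leq_add.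
have : has (predC (predU is_root in_l)) idx.
  rewrite has_count -(ltn_add2l (count (predU is_root in_l) idx)) addn0.
  by rewrite count_predC size_iota.
by case/hasP => n _ /norP [? ?]; exists n.
Qed.

Lemma size_le_fiber2 (T U : eqType) (g : T -> U) (h : T -> T) (s : seq T) :
  uniq s -> {in s &, forall q q', g q = g q' -> q = q' \/ q = h q'} ->
  (size s <= (size (undup (map g s))).*2)%N.
Proof.
case: s => [//|q0 s'] s_uniq fiber; set s := q0 :: s' in s_uniq fiber *.
set gs := undup (map g s); pose rep v := nth q0 s (index v (map g s)).
have rep_fiber q : q \in s -> rep (g q) \in s /\ g (rep (g q)) = g q.
  move=> qs; have gq : g q \in map g s by apply: map_f.
  have i_lt : (index (g q) (map g s) < size s)%N by rewrite -(size_map g) index_mem.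
  by rewrite /rep mem_nth // -(nth_map q0 (g q0)) ?nth_index.
have cover : {subset s <= map rep gs ++ map (h \o rep) gs}.
  move=> q qs; have [rep_s g_rep] := rep_fiber q qs.
  have gq : g q \in gs by rewrite mem_undup map_f.
  rewrite mem_cat; have [->|->] := fiber _ _ qs rep_s (esym g_rep).
    by rewrite map_f.
  by rewrite orbC (map_f (h \o rep)).
by rewrite (leq_trans (uniq_leq_size s_uniq cover)) // size_cat !size_map addnn.
Qed.

Lemma exists_nonroot_of_fiber2 (R : idomainType) (T : eqType) (Q : nat -> T)
    (g : T -> R) (h : T -> T) (p : {poly R}) :
  p != 0 -> injective Q ->
  (forall n m, g (Q n) = g (Q m) -> Q n = Q m \/ Q n = h (Q m)) ->
  exists n, ~~ root p (g (Q n)).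
Proof.
move=> p0 Q_inj fiber; set s := map Q (iota 0 (size p).*2).
suff /allPn [_ /mapP [n _ ->] ?] : ~~ all (fun q => root p (g q)) s by exists n.
apply/negP => all_roots.
have gs_small : (size (undup (map g s)) < size p)%N.
  apply: max_poly_roots p0 _ (undup_uniq _).
  by apply/allP => x; rewrite mem_undup => /mapP [q /(allP all_roots) ? ->].
have fiber_s : {in s &, forall q q', g q = g q' -> q = q' \/ q = h q'}.
  by move=> _ _ /mapP [n _ ->] /mapP [m _ ->]; apply: fiber.
have s_uniq : uniq s by rewrite map_inj_uniq ?iota_uniq.
have := size_le_fiber2 s_uniq fiber_s.
rewrite size_map size_iota leq_double => /leq_ltn_trans/(_ gs_small).
by rewrite ltnn.
Qed.

Definition dense_abscissae (F : rat -> rat) : Prop :=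
  forall p : {poly rat}, p != 0 -> exists x y, y ^+ 2 = F x /\ ~~ root p x.

Lemma dense_abscissae_scale (F G : rat -> rat) (r t : rat) : t != 0 ->
  (forall x, G ((x + r) / t ^+ 2) = F x / t ^+ 6) ->
  dense_abscissae F -> dense_abscissae G.
Proof.
move=> t0 FG denseF p p0; set q := t ^- 2 *: ('X + r%:P).
have q_size : size q = 2 by rewrite size_scale ?size_XaddC // invr_neq0 ?expf_neq0.
have [|x [y [onF not_root]]] := denseF (p \Po q); first by rewrite comp_poly_eq0 ?q_size.
exists ((x + r) / t ^+ 2), (y / t ^+ 3); split; first by rewrite FG -onF; field.
by move: not_root; rewrite /root horner_comp /q !hornerE mulrC.
Qed.

Section WeierstrassCurve.
Variables a b c : rat.

Definition cubic (x : rat) : rat := x ^+ 3 + a * x ^+ 2 + b * x + c.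
Definition cubic' (x : rat) : rat := 3 * x ^+ 2 + 2 * a * x + b.
Definition nonsingular : Prop := forall x, cubic x = 0 -> cubic' x != 0.

Definition ec_neg (P : ec_point) : ec_point :=
  if P is Some (x, y) then Some (x, - y) else None.

Definition slope (x1 y1 x2 y2 : rat) : rat :=
  if x1 == x2 then cubic' x1 / (2 * y1) else (y2 - y1) / (x2 - x1).

Lemma ec_add_Some x1 y1 x2 y2 : ~~ ((x1 == x2) && (y1 == - y2)) ->
  ec_add a b c (Some (x1, y1)) (Some (x2, y2)) =
  let l := slope x1 y1 x2 y2 in
  let x3 := l ^+ 2 - a - x1 - x2 in Some (x3, - (l * (x3 - x1) + y1)).
Proof. by move=> not_opp; rewrite /ec_add (negbTE not_opp). Qed.

Lemma slope_spec x1 y1 x2 y2 :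
  y1 ^+ 2 = cubic x1 -> y2 ^+ 2 = cubic x2 -> ~~ ((x1 == x2) && (y1 == - y2)) ->
  (x1 != x2 -> slope x1 y1 x2 y2 * (x2 - x1) = y2 - y1) /\
  (x1 = x2 -> y1 = y2 /\ cubic' x1 = 2 * slope x1 y1 x2 y2 * y1).
Proof.
move=> on1 on2 not_opp; rewrite /slope; split=> [ne12|eq12].
  by rewrite (negbTE ne12) mulfVK // subr_eq0 eq_sym.
rewrite eq12 eqxx /= in not_opp *.
have : y1 ^+ 2 == y2 ^+ 2 by rewrite on1 on2 eq12.
rewrite eqf_sqr (negbTE not_opp) orbF => /eqP y12; split=> //.
have y1_neq0 : y1 != 0 by apply: contraNneq not_opp => y10; rewrite -y12 y10 oppr0.
by rewrite -eq12; field.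
Qed.

(* The last identity is the derivative of the first one at x1. *)
Lemma chord_factor x1 y1 x2 y2 l :
  y1 ^+ 2 = cubic x1 -> y2 ^+ 2 = cubic x2 ->
  (x1 != x2 -> l * (x2 - x1) = y2 - y1) ->
  (x1 = x2 -> y1 = y2 /\ cubic' x1 = 2 * l * y1) ->
  let x3 := l ^+ 2 - a - x1 - x2 in
  [/\ forall x, cubic x - (l * (x - x1) + y1) ^+ 2 = (x - x1) * (x - x2) * (x - x3),
      l * (x2 - x1) + y1 = y2 &
      cubic' x1 - 2 * l * y1 = (x1 - x2) * (x1 - x3)].
Proof.
move=> on1 on2 secant tangent x3.
set e := cubic' x1 - 2 * l * y1 - (x1 - x2) * (x1 - x3).
have expand x : cubic x - (l * (x - x1) + y1) ^+ 2 =
    (x - x1) * (x - x2) * (x - x3) + e * (x - x1) + (cubic x1 - y1 ^+ 2).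
  by rewrite /e /x3 /cubic /cubic'; ring.
have through2 : l * (x2 - x1) + y1 = y2.
  have [eq12|ne12] := eqVneq x1 x2; last by rewrite secant // subrK.
  by have [<- _] := tangent eq12; rewrite eq12 subrr mulr0 add0r.
have e0 : e = 0.
  have [eq12|ne12] := eqVneq x1 x2.
    by rewrite /e; have [_ ->] := tangent eq12; rewrite eq12; ring.
  apply/eqP; move: (expand x2); rewrite through2 -on1 -on2 !subrr mulr0 !mul0r !addr0 add0r.
  by move/esym/eqP; rewrite mulf_eq0 => /orP [//|]; rewrite subr_eq0 eq_sym (negbTE ne12).
split=> //; first by move=> x; rewrite expand e0 mul0r addr0 on1 subrr addr0.
by apply/eqP; rewrite -subr_eq0; apply/eqP.
Qed.

Lemma ec_add_on_curve P Q : on_curve a b c P -> on_curve a b c Q ->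
  on_curve a b c (ec_add a b c P Q).
Proof.
case: P => [[x1 y1]|] //; case: Q => [[x2 y2]|] // /eqP on1 /eqP on2.
have [opp|not_opp] := boolP ((x1 == x2) && (y1 == - y2)); first by rewrite /ec_add opp.
have [secant tangent] := slope_spec on1 on2 not_opp.
have [chord _ _] := chord_factor on1 on2 secant tangent.
rewrite ec_add_Some //=; set l := slope _ _ _ _; set x3 := _ - x2.
by apply/eqP; rewrite sqrrN; apply/esym/eqP; rewrite -subr_eq0 chord subrr !mulr0.
Qed.

Lemma ec_mul_on_curve n P : on_curve a b c P -> on_curve a b c (ec_mul a b c n P).
Proof. by move=> onP; elim: n => [|n IH] //=; apply: ec_add_on_curve. Qed.

Hypothesis smooth : nonsingular.

(* -(P + Q) is the third point of the chord through P and Q, so adding it to P gives -Q. *)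
Lemma ec_neg_addK P Q : on_curve a b c P -> on_curve a b c Q ->
  ec_neg (ec_add a b c P (ec_neg (ec_add a b c P Q))) = Q.
Proof.
case: P => [[x1 y1]|]; last by case: Q => [[x y]|] //= _ _; rewrite opprK.
case: Q => [[x2 y2]|] /eqP on1; last by rewrite /= opprK !eqxx.
move=> /eqP on2; have [opp|not_opp] := boolP ((x1 == x2) && (y1 == - y2)).
  by rewrite /ec_add opp /=; case/andP: opp => /eqP -> /eqP ->; rewrite opprK.
have [secant tangent] := slope_spec on1 on2 not_opp.
have [_ through2 contact] := chord_factor on1 on2 secant tangent.
rewrite ec_add_Some //= opprK.
set l := slope x1 y1 x2 y2 in through2 contact *; set x3 := l ^+ 2 - a - x1 - x2 in contact *.
have not_opp' : ~~ ((x1 == x3) && (y1 == - (l * (x3 - x1) + y1))).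
  apply/negP => /andP [/eqP e13 /eqP]; rewrite -e13 subrr mulr0 add0r => y1_opp.
  have y10 : y1 = 0 by lra.
  rewrite y10 mulr0 subr0 in contact.
  have cubic0 : cubic x1 = 0 by rewrite /cubic -on1 y10 expr0n.
  by move: (smooth cubic0); rewrite contact -e13 subrr mulr0 eqxx.
rewrite (negbTE not_opp') -/(slope x1 y1 x3 _) /= !opprK.
have -> : slope x1 y1 x3 (l * (x3 - x1) + y1) = l.
  rewrite /slope; have [e13|ne13] := eqVneq x1 x3; last by field; rewrite subr_eq0 eq_sym.
  have y10 : y1 != 0.
    by apply: contra not_opp' => /eqP y10; rewrite e13 subrr mulr0 add0r y10 oppr0 !eqxx.
  by move: contact; rewrite -e13 subrr mulr0 => /eqP; rewrite subr_eq0 => /eqP ->; field.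
have -> : l ^+ 2 - a - x1 - x3 = x2 by rewrite /x3; ring.
by rewrite through2.
Qed.

Lemma ec_add_inj P : on_curve a b c P -> {in on_curve a b c &, injective (ec_add a b c P)}.
Proof.
by move=> onP Q Q' onQ onQ' e; rewrite -(ec_neg_addK onP onQ) -(ec_neg_addK onP onQ') e.
Qed.

Lemma ec_mul_inj P : on_curve a b c P -> (forall n, (0 < n)%N -> ec_mul a b c n P != None) ->
  injective (ec_mul a b c ^~ P).
Proof.
move=> onP inf; elim=> [|n IH] [|m] //= e.
- by have := inf m.+1 isT; rewrite /= -e eqxx.
- by have := inf n.+1 isT; rewrite /= e eqxx.
- by congr S; apply: IH; apply: (ec_add_inj onP) e; apply: ec_mul_on_curve.
Qed.

Lemma positive_rank_dense : positive_rank a b c -> dense_abscissae cubic.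
Proof.
move=> [P [onP inf]] p p0; pose Q n := odflt (0, 0) (ec_mul a b c n.+1 P).
have QE n : ec_mul a b c n.+1 P = Some (Q n).
  by rewrite /Q; case: (ec_mul a b c n.+1 P) (inf n.+1 isT).
have onQ n : (Q n).2 ^+ 2 = cubic (Q n).1.
  by have := ec_mul_on_curve n.+1 onP; rewrite QE; case: (Q n) => x y /eqP.
have Q_inj : injective Q.
  by move=> n m e; apply/succn_inj/(ec_mul_inj onP inf); rewrite [LHS]QE [RHS]QE e.
have fiber n m : (Q n).1 = (Q m).1 -> Q n = Q m \/ Q n = ((Q m).1, - (Q m).2).
  move=> e1; have : (Q n).2 ^+ 2 == (Q m).2 ^+ 2 by rewrite !onQ e1.
  rewrite eqf_sqr => /orP [] /eqP e2; [left | right];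
    by rewrite [Q n]surjective_pairing e1 e2 // -surjective_pairing.
have [n not_root] := exists_nonroot_of_fiber2 (h := fun q => (q.1, - q.2)) p0 Q_inj fiber.
by exists (Q n).1, (Q n).2.
Qed.

End WeierstrassCurve.

Lemma cubic_roots e1 e2 e3 x :
  cubic (- (e1 + e2 + e3)) (e1 * e2 + e1 * e3 + e2 * e3) (- (e1 * e2 * e3)) x =
  (x - e1) * (x - e2) * (x - e3).
Proof. by rewrite /cubic; ring. Qed.

Lemma nonsingular_roots e1 e2 e3 : e1 != e2 -> e1 != e3 -> e2 != e3 ->
  nonsingular (- (e1 + e2 + e3)) (e1 * e2 + e1 * e3 + e2 * e3) (- (e1 * e2 * e3)).
Proof.
move=> ne12 ne13 ne23 x; rewrite cubic_roots.
have -> : cubic' (- (e1 + e2 + e3)) (e1 * e2 + e1 * e3 + e2 * e3) x =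
    (x - e2) * (x - e3) + (x - e1) * (x - e3) + (x - e1) * (x - e2).
  by rewrite /cubic'; ring.
have ne_sub u v : u != v -> u - v != 0 by rewrite subr_eq0.
move/eqP; rewrite !mulf_eq0 !subr_eq0 => /orP [/orP [] |] /eqP ->;
  by rewrite !subrr !(mul0r, mulr0, add0r, addr0) mulf_neq0 ?ne_sub // eq_sym.
Qed.

Lemma positive_rank_roots_dense e1 e2 e3 : e1 != e2 -> e1 != e3 -> e2 != e3 ->
  positive_rank_roots e1 e2 e3 ->
  dense_abscissae (fun x => (x - e1) * (x - e2) * (x - e3)).
Proof.
move=> ne12 ne13 ne23 /(positive_rank_dense (nonsingular_roots ne12 ne13 ne23)) dense p p0.
by have [x [y [on not_root]]] := dense p p0; exists x, y; rewrite -cubic_roots.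
Qed.

Section ProductEquation.
Variables A C : int.
Local Notation a := (A%:~R : rat).
Local Notation c := (C%:~R : rat).
Local Notation f := (fAC A C).
Hypotheses (a0 : a != 0) (c0 : c != 0).

Definition nontrivial_sols_infinite : Prop :=
  forall s : seq (rat * rat * rat), exists t, nontrivial_sol A C t /\ t \notin s.

Lemma fAC_opp x : f (- x) = - f x.
Proof. by rewrite /fAC invrN; ring. Qed.

Lemma fAC_dual x : x != 0 -> f (c / (a * x)) = f x.
Proof. by move=> x0; rewrite /fAC; field; rewrite x0 a0 c0. Qed.

Lemma fAC_preimage k w : k ^+ 2 - w ^+ 2 = 4 * a * c -> exists2 x, x != 0 & f x = k.
Proof.
move=> kw; have kw0 : k + w != 0.
  apply/eqP => kw0; move/eqP: kw.
  rewrite (_ : k ^+ 2 - w ^+ 2 = (k + w) * (k - w)); last by ring.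
  by rewrite kw0 mul0r eq_sym (negbTE (_ : 4 * a * c != 0)) // !mulf_neq0.
exists ((k + w) / (2 * a)); first by rewrite mulf_neq0 // invr_eq0 mulf_neq0.
rewrite /fAC (_ : c = (k ^+ 2 - w ^+ 2) / (4 * a)); last by rewrite kw; field; rewrite a0.
by field; rewrite kw0 a0.
Qed.

Lemma product_from_point u X Y : u != 0 -> Y != 0 ->
  Y ^+ 2 = X * (X - 4 * a * c) * (X - 4 * a * c * u ^+ 2) ->
  exists y z, [/\ y != 0, z != 0, f z = (X ^+ 2 - (4 * a * c * u) ^+ 2) / (2 * Y)
                 & u * f y = f z].
Proof.
set D : rat := 4 * a * c => u0 Y0 onXY.
have D0 : D != 0 by rewrite !mulf_neq0.
set sv : rat := (X ^+ 2 - (D * u) ^+ 2) / (2 * Y).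
have [z z0 fz] : exists2 z, z != 0 & f z = sv.
  apply: (fAC_preimage (w := (X ^+ 2 - 2 * D * X + (D * u) ^+ 2) / (2 * Y))).
  transitivity (D * (X * (X - D) * (X - D * u ^+ 2)) / Y ^+ 2); first by rewrite /sv /D; field.
  by rewrite -onXY /D; field.
have [y y0 fy] : exists2 y, y != 0 & f y = sv / u.
  apply: (fAC_preimage (w := (X ^+ 2 - 2 * D * u ^+ 2 * X + (D * u) ^+ 2) / (2 * Y * u))).
  transitivity (D * (X * (X - D) * (X - D * u ^+ 2)) / Y ^+ 2).
    by rewrite /sv /D; field; rewrite Y0 u0.
  by rewrite -onXY /D; field.
by exists y, z; split=> //; rewrite fy fz mulrC divfK.
Qed.

Lemma nontrivial_sol_of_f x y z : x != 0 -> y != 0 -> z != 0 -> f x * f y = f z ->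
  f z != f x -> y != z -> f z != 0 -> nontrivial_sol A C (x, y, z).
Proof.
move=> x0 y0 z0 eq_f fzx yz fz0; do !split=> //.
by apply: contraNneq fzx => ->.
Qed.

Lemma nontrivial_sols_infinite_of_curve T : T != 0 -> f T != 0 -> f T != 1 ->
  dense_abscissae (fun X => X * (X - 4 * a * c) * (X - 4 * a * c * f T ^+ 2)) ->
  nontrivial_sols_infinite.
Proof.
set u := f T; set D := 4 * a * c => T0 u0 u1 dense s.
pose E : {poly rat} := 'X * ('X - D%:P) * ('X - (D * u ^+ 2)%:P).
pose q v : {poly rat} := ('X ^+ 2 - ((D * u) ^+ 2)%:P) ^+ 2 - (4 * v ^+ 2)%:P * E.
pose vs := 0 :: u :: [seq f t.2 | t <- s].
have E_eval X : E.[X] = X * (X - D) * (X - D * u ^+ 2) by rewrite !hornerE.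
have [|X [Y [onXY]]] := dense (E * \prod_(v <- vs) q v).
  rewrite mulf_neq0 ?prodf_seq_neq0 //; first by rewrite !mulf_neq0 ?polyX_eq0 ?polyXsubC_eq0.
  apply/allP => v _ /=; apply: (poly_neq0_horner (x := 0) (v := (D * u) ^+ 4)).
    by rewrite !(hornerD, hornerN, hornerM, hornerX, hornerC, horner_exp) /D; ring.
  by rewrite expf_neq0 // !mulf_neq0.
rewrite /root hornerM mulf_eq0 negb_or horner_prod prodf_seq_neq0.
move=> /andP [E_X /allP q_X].
have Y0 : Y != 0 by apply: contraNneq E_X => Y0; rewrite E_eval -onXY Y0 expr0n.
set sv := (X ^+ 2 - (D * u) ^+ 2) / (2 * Y).
(* (q v).[X] = 4 Y^2 (sv^2 - v^2) *)
have sv_vs v : v \in vs -> sv != v.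
  move/q_X; apply: contraNneq => sv_v.
  rewrite !(hornerD, hornerN, hornerM, hornerX, hornerC, horner_exp) -onXY -sv_v.
  by apply/eqP; rewrite /sv /D; field.
have [y [z [y0 z0 fz fy]]] := product_from_point u0 Y0 onXY.
rewrite -/D -/sv in fz.
have sv0 : sv != 0 := sv_vs 0 (mem_head _ _).
exists (T, y, z); split.
  apply: nontrivial_sol_of_f; rewrite ?fz //.
  - by rewrite -fz -fy.
  - by apply: (sv_vs u); rewrite !inE eqxx orbT.
  - apply: contraNneq sv0 => yz; move: fy; rewrite yz fz => /eqP.
    by rewrite -subr_eq0 -{2}[sv]mul1r -mulrBl mulf_eq0 subr_eq0 (negbTE u1).
have : sv \notin vs by apply/negP => /sv_vs; rewrite eqxx.
apply: contra => ts; rewrite -fz !inE; apply/or3P; apply: Or33.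
by apply/mapP; exists (T, y, z).
Qed.

Lemma nontrivial_sols_infinite_unit T : T != 0 -> f T = 1 \/ f T = -1 ->
  nontrivial_sols_infinite.
Proof.
set u := f T => T0 u_unit s.
pose partner m := if u == 1 then c / (a * m) else - m.
have f_partner m : m != 0 -> f (partner m) = u * f m.
  rewrite /partner; case: u_unit => ->; rewrite ?eqxx => m0.
    by rewrite fAC_dual // mul1r.
  by rewrite fAC_opp mulN1r.
pose p : {poly rat} :=
  'X * (a *: 'X ^+ 2 + c%:P) * (a *: 'X ^+ 2 - c%:P) * (a *: 'X ^+ 2 - 'X + c%:P).
have p0 : p != 0.
  rewrite !mulf_neq0 ?polyX_eq0 //.
  - by apply: (poly_neq0_horner (x := 0) (v := c)) => //; rewrite !hornerE /=; ring.
  - by apply: (poly_neq0_horner (x := 0) (v := - c)); rewrite ?oppr_eq0 // !hornerE /=; ring.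
  - by apply: (poly_neq0_horner (x := 0) (v := c)) => //; rewrite !hornerE /=; ring.
pose F (n : nat) := (T, n%:R : rat, partner n%:R).
have F_inj : injective F by move=> n m [/eqP]; rewrite eqr_nat => /eqP.
have [n [not_root Fn_notin]] := exists_nat_nonroot_notin s p0 F_inj.
exists (F n); split=> //; move: not_root; rewrite /F; move: (n%:R : rat) => m.
rewrite /root !hornerE /= !mulf_eq0 !negb_or => /andP [/andP [/andP [m0 fm0] m_dual] fm1].
have u0 : u != 0 by case: u_unit => ->; rewrite ?oppr_eq0 oner_eq0.
have fmE : f m = (a * m * m + c) / m by rewrite /fAC; field; exact: m0.
have fm_neq0 : f m != 0 by rewrite fmE mulf_neq0 ?invr_eq0.
have fm_neq1 : f m != 1.
  rewrite fmE; apply: contraNneq fm1 => fm_1.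
  have -> : a * m * m - m + c = ((a * m * m + c) / m - 1) * m by field.
  by rewrite fm_1 subrr mul0r.
apply: nontrivial_sol_of_f => //.
- rewrite /partner; case: ifP => _; rewrite ?oppr_eq0 //.
  by rewrite mulf_neq0 // invr_eq0 mulf_neq0.
- by rewrite f_partner.
- by rewrite f_partner // -[X in _ != X]mulr1 (inj_eq (mulfI u0)).
- rewrite /partner; case: u_unit => ->; rewrite ?eqxx /=.
    apply: contraNneq m_dual => m_dual.
    have -> : a * m * m - c = (m - c / (a * m)) * (a * m) by field; rewrite a0 m0.
    by rewrite -m_dual subrr mul0r.
  by apply: contraNneq m0 => ?; lra.
- by rewrite f_partner // mulf_neq0.
Qed.

Lemma circle_sol X Y : X != 0 -> Y != 0 -> X != 1 -> Y != 1 -> (X * Y) ^+ 2 + a * c != 0 ->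
  X ^+ 2 + Y ^+ 2 = 1 - a * c -> nontrivial_sol A C (X / a, Y / a, X * Y / a).
Proof.
move=> X0 Y0 X1 Y1 XY_ac circle.
have XY0 : X * Y != 0 by rewrite mulf_neq0.
have fz : f (X * Y / a) = ((X * Y) ^+ 2 + a * c) / (X * Y).
  by rewrite /fAC; field; rewrite X0 Y0 a0.
do !split; rewrite ?mulf_neq0 ?invr_eq0 //.
- apply/eqP; rewrite -subr_eq0; apply/eqP.
  transitivity (a * c * (X ^+ 2 + Y ^+ 2 - (1 - a * c)) / (X * Y)).
    by rewrite /fAC; field; rewrite X0 Y0 a0.
  by rewrite circle subrr mulr0 mul0r.
- apply: contraNneq Y1 => e; have -> : Y = (X * Y / a) / (X / a) by field; rewrite X0 a0.
  by rewrite -e divff // mulf_neq0 ?invr_eq0.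
- apply: contraNneq X1 => e; have -> : X = (X * Y / a) / (Y / a) by field; rewrite Y0 a0.
  by rewrite -e divff // mulf_neq0 ?invr_eq0.
- by rewrite fz mulf_neq0 ?invr_eq0.
Qed.

Lemma nontrivial_sols_infinite_zero T : T != 0 -> f T = 0 -> nontrivial_sols_infinite.
Proof.
move=> T0 fT0 s.
have [l l0 ac_l] : exists2 l, l != 0 & a * c = - l ^+ 2.
  exists (a * T); first by rewrite mulf_neq0.
  have cE : c = f T * T - a * T ^+ 2 by rewrite /fAC; field.
  by rewrite cE fT0; ring.
have sq1 (x : rat) : 1 + x ^+ 2 != 0 by rewrite paddr_eq0 ?ler01 ?sqr_ge0 // oner_eq0.
(* X k + i Y k = (1 + i l) (1 + i k)^2 / (1 + k^2) *)
pose NX : {poly rat} := 1 - 'X ^+ 2 - (2 * l) *: 'X.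
pose NY : {poly rat} := 2 *: 'X + l *: (1 - 'X ^+ 2).
pose N1 : {poly rat} := 1 + 'X ^+ 2.
pose X k := NX.[k] / N1.[k]; pose Y k := NY.[k] / N1.[k].
have N1E k : N1.[k] = 1 + k ^+ 2 by rewrite !hornerE.
have circle k : X k ^+ 2 + Y k ^+ 2 = 1 - a * c.
  by rewrite ac_l /X /Y !hornerE /=; field.
have inverse k : (Y k - l * X k) / (1 + l ^+ 2 + X k + l * Y k) = k.
  have -> : 1 + l ^+ 2 + X k + l * Y k = 2 * (1 + l ^+ 2) / (1 + k ^+ 2).
    by rewrite /X /Y !hornerE /=; field.
  by rewrite /X /Y !hornerE /=; field; rewrite sq1 sq1.
pose p := NX * NY * (NX - N1) * (NY - N1) *
  (NX * NY - l *: N1 ^+ 2) * (NX * NY - (- l) *: N1 ^+ 2).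
have p0 : p != 0.
  repeat apply: mulf_neq0.
  - by apply: (poly_neq0_horner (x := 0) (v := 1)) => //; rewrite !hornerE /=; ring.
  - by apply: (poly_neq0_horner (x := 0) (v := l)) => //; rewrite !hornerE /=; ring.
  - apply: (poly_neq0_horner (x := l) (v := - 4 * l ^+ 2)); last by rewrite !mulf_neq0 ?expf_neq0.
    by rewrite !hornerE /=; ring.
  - by apply: (poly_neq0_horner (x := -1) (v := - 4)) => //; rewrite !hornerE /=; ring.
  - apply: (poly_neq0_horner (x := 1) (v := - 8 * l)); last by rewrite mulf_neq0.
    by rewrite !hornerE /=; ring.
  - apply: (poly_neq0_horner (x := 0) (v := 2 * l)); last by rewrite mulf_neq0.
    by rewrite !hornerE /=; ring.
clearbody NX NY N1.
have ratio_neq (P Q : {poly rat}) k v : Q.[k] != 0 -> ~~ root (P - v *: Q) k ->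
    P.[k] / Q.[k] != v.
  by move=> Q0; apply: contraNneq => <-; rewrite /root hornerD hornerN hornerZ divfK ?subrr.
pose F (n : nat) := (X n%:R / a, Y n%:R / a, X n%:R * Y n%:R / a).
have F_inj : injective F.
  move=> n m [/(mulIf (invr_neq0 a0)) eX /(mulIf (invr_neq0 a0)) eY _].
  by apply/eqP; rewrite -(eqr_nat rat) -[n%:R]inverse -[m%:R]inverse eX eY.
have [n [not_root Fn_notin]] := exists_nat_nonroot_notin s p0 F_inj.
exists (F n); split=> //; move: not_root; rewrite /F; move: (n%:R : rat) => k.
rewrite !rootM !negb_or => /andP [/andP [/andP [/andP [/andP [NX0 NY0] NX1] NY1] XYm] XYp].
have N10 : N1.[k] != 0 by rewrite N1E sq1.
have XY_E : X k * Y k = (NX * NY).[k] / (N1 ^+ 2).[k] by rewrite hornerM horner_exp mulf_div expr2.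
apply: circle_sol; rewrite ?circle //.
- by rewrite mulf_neq0 ?invr_eq0.
- by rewrite mulf_neq0 ?invr_eq0.
- by apply: ratio_neq; rewrite ?scale1r.
- by apply: ratio_neq; rewrite ?scale1r.
- rewrite ac_l (_ : _ + - _ = (X k * Y k - l) * (X k * Y k - - l)); last by ring.
  by rewrite mulf_neq0 // subr_eq0 XY_E ratio_neq // horner_exp expf_neq0.
Qed.

Lemma dense_abscissae_of_E2 T : T != 0 -> f T != 0 -> f T != 1 -> f T != -1 ->
  positive_rank_roots (2 * a * c * T ^+ 2) (- (2 * a * c * T ^+ 2))
    (2 * a * c * (2 * a ^+ 2 * T ^+ 4 + (4 * a * c - 1) * T ^+ 2 + 2 * c ^+ 2)) ->
  dense_abscissae (fun X => X * (X - 4 * a * c) * (X - 4 * a * c * f T ^+ 2)).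
Proof.
set e1 := 2 * a * c * T ^+ 2; set e3 := 2 * a * c * _ => T0 u0 u1 um1 rank.
have e1_neq0 : e1 != 0 by rewrite !mulf_neq0 ?expf_neq0.
have e3_sub : e3 - e1 = 4 * a * c * T ^+ 2 * ((f T - 1) * (f T + 1)).
  by rewrite /e3 /e1 /fAC; field.
have e3_add : e3 - - e1 = 4 * a * c * T ^+ 2 * f T ^+ 2.
  by rewrite /e3 /e1 /fAC; field.
apply: (dense_abscissae_scale (r := e1) T0 _ (positive_rank_roots_dense _ _ _ rank)).
- by move=> x; rewrite /e1 /e3 /fAC; field.
- by apply: contraNneq e1_neq0 => ?; lra.
- by rewrite eq_sym -subr_eq0 e3_sub !mulf_neq0 ?expf_neq0 ?subr_eq0 ?addr_eq0.
- by rewrite eq_sym -subr_eq0 e3_add !mulf_neq0 ?expf_neq0.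
Qed.

End ProductEquation.

Theorem theorem1p2 (A C : int) (hAC : A * C != 0) (T : rat) (hT : T != 0)
  (hE2 : positive_rank_roots
           (2 * A%:~R * C%:~R * T ^+ 2)
           (- (2 * A%:~R * C%:~R * T ^+ 2))
           (2 * A%:~R * C%:~R *
              (2 * A%:~R ^+ 2 * T ^+ 4 + (4 * A%:~R * C%:~R - 1) * T ^+ 2
               + 2 * C%:~R ^+ 2))) :
  forall s : seq (rat * rat * rat),
    exists t : rat * rat * rat, nontrivial_sol A C t /\ t \notin s.
Proof.
move=> s.
have a0 : (A%:~R : rat) != 0 by rewrite intr_eq0; apply: contraNneq hAC => ->; rewrite mul0r.
have c0 : (C%:~R : rat) != 0 by rewrite intr_eq0; apply: contraNneq hAC => ->; rewrite mulr0.
have [u0|u0] := eqVneq (fAC A C T) 0; first exact (nontrivial_sols_infinite_zero a0 hT u0 s).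
have [u1|u1] := eqVneq (fAC A C T) 1.
  exact (nontrivial_sols_infinite_unit a0 c0 hT (or_introl u1) s).
have [um1|um1] := eqVneq (fAC A C T) (-1).
  exact (nontrivial_sols_infinite_unit a0 c0 hT (or_intror um1) s).
have dense := dense_abscissae_of_E2 a0 c0 hT u0 u1 um1 hE2.
exact (nontrivial_sols_infinite_of_curve a0 c0 hT u0 u1 dense s).
Qed.
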